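(* Let $m\ge2$. There exist constants $\alpha,c>0$ and $d\ge0$, depending only on $m$ and $n$, such that for all $A_1,\dots,A_m\in\mathcal{P}$, $$\mathrm{tr}(A_1A_2^{-1})+\mathrm{tr}(A_2A_3^{-1})+\dots+\mathrm{tr}(A_{m-1}A_m^{-1})\ge c\,\mathrm{tr}(A_1^\alpha A_m^{-\alpha})-d.$$
   Context: $\mathcal{P}$ is the space of positive definite $n\times n$ real symmetric matrices, with $n$ fixed; powers $A^\alpha$ are defined by functional calculus. *)

From HB Require Import structures.
From mathcomp Require Import all_boot all_order all_algebra.
From mathcomp Require Import boolp reals exp.
Set Implicit Arguments. Unset Strict Implicit. Unset Printing Implicit Defensive.
Import Order.TTheory GRing.Theory Num.Theory.
Local Open Scope ring_scope.

Definition posdef (R : realType) (n : nat) (A : 'M[R]_n) : Prop :=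
  A^T = A /\ forall v : 'cV[R]_n, v != 0 -> 0 < (v^T *m A *m v) 0 0.

Definition spec_decomp (R : realType) (n : nat) (A : 'M[R]_n)
    (Q : 'M[R]_n) (d : 'rV[R]_n) : Prop :=
  Q^T *m Q = 1%:M /\ (forall i, 0 < d 0 i) /\ A = Q *m diag_mx d *m Q^T.

(* Functional calculus: A^a := Q diag(d_i^a) Q^T for a spectral decomposition
   of A (for positive definite A one exists, and the result does not depend on
   the chosen decomposition); 0 for matrices without such decomposition. *)
Definition matpow (R : realType) (n : nat) (A : 'M[R]_n) (a : R) : 'M[R]_n :=
  match pselect (exists p : 'M[R]_n * 'rV[R]_n, spec_decomp A p.1 p.2) with
  | left h => let p := projT1 (cid h) in
      p.1 *m diag_mx (map_mx (fun x => powR x a) p.2) *m p.1^T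
  | right _ => 0
  end.

(* For positive definite A, B and every vector v, v^T A v <= tr(A B^-1) v^T B v: with
   B = G G^T this is "largest eigenvalue <= trace" for G^-1 A G^-T.  Chaining these
   bounds gives A_1 <= T A_m in the Loewner order, with T the product of the traces
   tr(A_i A_(i+1)^-1).  For spectral decompositions A_1 = Q diag(d) Q^T and
   A_m = U diag(e) U^T, column j of the orthogonal matrix W = Q^T U yields weights
   W_ij^2 summing to 1 with sum_i W_ij^2 d_i <= T e_j, so concavity of x^alpha
   (0 < alpha <= 1) bounds tr(A_1^alpha A_m^-alpha) = sum_ij W_ij^2 (d_i/e_j)^alpha by
   n T^alpha.  For alpha = 1/(m-1), AM-GM turns T^alpha into the arithmetic mean of
   the traces, whence c = (m-1)/n and d = 0. *)

From HB Require Import structures.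
From mathcomp Require Import all_boot all_order all_algebra.
From mathcomp Require Import boolp reals exp.
From mathcomp Require Import ring lra.
Import Order.TTheory GRing.Theory Num.Theory.
Local Open Scope ring_scope.
Set Implicit Arguments. Unset Strict Implicit.

Section PositiveDefinite.
Variable R : realType.

Definition qform n (A : 'M[R]_n) (v : 'cV[R]_n) : R := (v^T *m A *m v) 0 0.

Lemma posdef_unitmx n (B : 'M[R]_n) : posdef B -> B \in unitmx.
Proof.
move=> [_ Bpos]; rewrite -row_free_unit -kermx_eq0; apply/eqP/row_matrixP => i.
rewrite row0; apply/eqP/negPn/negP => nz_u.
have /sub_kermxP uB : (row i (kermx B) <= kermx B)%MS by exact: row_sub.
by have := Bpos (row i (kermx B))^T; rewrite trmx_eq0 nz_u trmxK uB mul0mx mxE ltxx => /(_ isT).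
Qed.

Lemma posdef_congr n (A G : 'M[R]_n) : posdef A -> G \in unitmx -> posdef (G *m A *m G^T).
Proof.
move=> [As Apos] Gu; split; first by rewrite !trmx_mul trmxK As mulmxA.
move=> v nz_v; have nz_Gv : G^T *m v != 0.
  apply: contraNneq nz_v => Gv0.
  by rewrite -[v]mul1mx -(@mulVmx _ _ G^T) ?unitmx_tr // -mulmxA Gv0 mulmx0.
by have := Apos _ nz_Gv; rewrite trmx_mul trmxK !mulmxA.
Qed.

Lemma qform_col_mx n (B : 'M[R]_(1 + n)) (x : 'cV[R]_1) (w : 'cV[R]_n) : B^T = B ->
  qform B (col_mx x w) =
  qform (ulsubmx B) x + 2 * (w^T *m dlsubmx B *m x) 0 0 + qform (drsubmx B) w.
Proof.
move=> Bs; have ur : ursubmx B = (dlsubmx B)^T by rewrite trmx_dlsub Bs.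
have xw : x^T *m (dlsubmx B)^T *m w = (w^T *m dlsubmx B *m x)^T.
  by rewrite !trmx_mul trmxK mulmxA.
rewrite /qform -[in LHS](submxK B) ur tr_col_mx mul_row_block mul_row_col !mulmxDl.
rewrite xw; set q1 := x^T *m _ *m x; set q2 := w^T *m _ *m x; set q3 := w^T *m _ *m w.
by rewrite !mxE; ring.
Qed.

Lemma posdef_schur n (B : 'M[R]_(1 + n)) : posdef B ->
  0 < ulsubmx B 0 0 /\
  posdef (drsubmx B - (ulsubmx B 0 0)^-1 *: (dlsubmx B *m (dlsubmx B)^T)).
Proof.
move=> [Bs Bpos]; set a := ulsubmx B 0 0; set b := dlsubmx B.
have Bq v : v != 0 -> 0 < qform B v := Bpos v.
have a_gt0 : 0 < a.
  have := Bq (col_mx 1 0); rewrite col_mx_eq0 oner_eq0 qform_col_mx //.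
  rewrite /qform trmx0 trmx1 !(mul0mx, mulmx1, mul1mx) [(0 : 'M_1) 0 0]mxE mulr0 !addr0.
  by apply.
split=> //; split.
  by rewrite linearB linearZ /= trmx_mul trmxK trmx_drsub Bs.
move=> w nz_w; pose x : 'cV[R]_1 := - (a^-1 *: (b^T *m w)).
have := Bq (col_mx x w); rewrite col_mx_eq0 (negbTE nz_w) andbF qform_col_mx //.
set y := (b^T *m w) 0 0.
have bw : b^T *m w = y%:M by exact: mx11_scalar.
have wb : w^T *m b = y%:M by rewrite -[LHS]trmxK trmx_mul trmxK bw tr_scalar_mx.
have -> : x = (- (a^-1 * y))%:M by rewrite /x bw scale_scalar_mx raddfN.
rewrite [ulsubmx B]mx11_scalar -/a -/b /qform tr_scalar_mx wb -!scalar_mxM.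
rewrite mulmxBr mulmxBl -scalemxAr -scalemxAl !mulmxA wb -[y%:M *m b^T *m w]mulmxA bw.
rewrite -scalar_mxM !mxE !eqxx !mulr1n => /(_ isT).
suff -> : - (a^-1 * y) * a * - (a^-1 * y) + 2 * (y * - (a^-1 * y)) = - (a^-1 * (y * y)).
  by rewrite addrC.
by field; rewrite gt_eqF.
Qed.

Lemma posdef_cholesky n (B : 'M[R]_n) : posdef B -> exists G : 'M[R]_n, B = G *m G^T.
Proof.
elim: n B => [|n IH] B PB; first by exists 0; apply/matrixP => [[]].
move: B PB; change (forall B : 'M[R]_(1 + n), posdef B -> exists G : 'M_(1 + n), B = G *m G^T).
move=> B PB; have [a_gt0 /IH[H defS]] := posdef_schur PB.
set a := ulsubmx _ 0 0 in a_gt0 defS; set b := dlsubmx _ in defS.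
have ur : ursubmx B = b^T by rewrite trmx_dlsub PB.1.
pose s := Num.sqrt a; have s_neq0 : s != 0 by rewrite gt_eqF ?sqrtr_gt0.
have ss : s * s = a by rewrite -expr2 sqr_sqrtr // ltW.
exists (block_mx s%:M 0 (s^-1 *: b) H).
rewrite -[B in LHS]submxK tr_block_mx mulmx_block.
rewrite !(trmx0, mulmx0, mul0mx, addr0, add0r, tr_scalar_mx) -scalar_mxM ss ur.
congr block_mx.
- by rewrite [LHS]mx11_scalar.
- by rewrite mul_scalar_mx linearZ /= scalerA divff // scale1r.
- by rewrite -scalemxAl mul_mx_scalar scalerA mulVf // scale1r.
- rewrite -defS linearZ /= -scalemxAl -scalemxAr scalerA -invfM ss.
  by rewrite addrC subrK.
Qed.

Lemma cauchy_schwarz_sum (I : finType) (f g : I -> R) :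
  (\sum_i f i * g i) ^+ 2 <= (\sum_i f i ^+ 2) * (\sum_i g i ^+ 2).
Proof.
set Sfg := \sum_i f i * g i; set Sf := \sum_i f i ^+ 2; set Sg := \sum_i g i ^+ 2.
have sqr_expand i j : (f i * g j - f j * g i) ^+ 2 =
    f i ^+ 2 * g j ^+ 2 + g i ^+ 2 * f j ^+ 2 - (f i * g i) * (f j * g j) * 2.
  by ring.
have lagrange : \sum_i \sum_j (f i * g j - f j * g i) ^+ 2 = (Sf * Sg + Sg * Sf - Sfg ^+ 2 * 2).
  under eq_bigr => i _ do rewrite (eq_bigr _ (fun j _ => sqr_expand i j)) sumrB big_split /=.
  rewrite sumrB big_split /= -!big_distrlr /= expr2 /Sfg mulr_suml mulr_suml.
  by congr (_ - _); apply: eq_bigr => i _; rewrite mulr_sumr mulr_suml.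
have : 0 <= \sum_i \sum_j (f i * g j - f j * g i) ^+ 2.
  by apply: sumr_ge0 => i _; apply: sumr_ge0 => j _; apply: sqr_ge0.
rewrite lagrange; lra.
Qed.

Lemma qform_gram_le n (H : 'M[R]_n) (w : 'cV[R]_n) :
  qform (H *m H^T) w <= \tr (H *m H^T) * (w^T *m w) 0 0.
Proof.
have -> : qform (H *m H^T) w = \sum_k (\sum_i H i k * w i 0) ^+ 2.
  rewrite /qform mulmxA -(trmxK (w^T *m H)) trmx_mul trmxK -mulmxA mxE.
  by apply: eq_bigr => k _; rewrite !mxE expr2; congr (_ * _); apply: eq_bigr => i _; rewrite !mxE.
have -> : \tr (H *m H^T) = \sum_k \sum_i H i k ^+ 2.
  rewrite exchange_big; apply: eq_bigr => i _; rewrite mxE.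
  by apply: eq_bigr => k _; rewrite mxE expr2.
have -> : (w^T *m w) 0 0 = \sum_i w i 0 ^+ 2.
  by rewrite mxE; apply: eq_bigr => i _; rewrite mxE expr2.
rewrite mulr_suml; apply: ler_sum => k _.
exact: cauchy_schwarz_sum.
Qed.

Lemma qform_le_mxtrace n (A B : 'M[R]_n) (v : 'cV[R]_n) : posdef A -> posdef B ->
  qform A v <= \tr (A *m invmx B) * qform B v.
Proof.
move=> PA /[dup] PB /posdef_cholesky[G defB].
have Gu : G \in unitmx by move: (posdef_unitmx PB); rewrite defB unitmx_mul => /andP[].
pose Gi := invmx G; pose X := Gi *m A *m Gi^T.
have Giu : Gi \in unitmx by rewrite unitmx_inv.
have [H defX] := posdef_cholesky (posdef_congr PA Giu).
have defA : A = G *m X *m G^T.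
  by rewrite /X !mulmxA mulmxV // mul1mx -mulmxA -trmx_mul mulmxV // trmx1 mulmx1.
have defBi : invmx B = Gi^T *m Gi.
  rewrite -[RHS](mulKmx (posdef_unitmx PB)) [in X in _ *m X]defB.
  by rewrite -mulmxA (mulmxA G^T) -trmx_mul mulVmx // trmx1 mul1mx mulmxV // mulmx1.
have -> : \tr (A *m invmx B) = \tr X.
  rewrite defA defBi !mulmxA mxtrace_mulC !mulmxA mulVmx // mul1mx.
  by rewrite -mulmxA -trmx_mul mulVmx // trmx1 mulmx1.
have -> : qform A v = qform (H *m H^T) (G^T *m v).
  by rewrite /qform -defX -/X defA trmx_mul trmxK !mulmxA.
have -> : qform B v = ((G^T *m v)^T *m (G^T *m v)) 0 0.
  by rewrite /qform defB trmx_mul trmxK !mulmxA.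
rewrite /X defX; exact: qform_gram_le.
Qed.

Lemma mxtrace_mul_invmx_gt0 n (A B : 'M[R]_n.+1) :
  posdef A -> posdef B -> 0 < \tr (A *m invmx B).
Proof.
move=> PA PB; pose v : 'cV[R]_n.+1 := const_mx 1.
have nz_v : v != 0 by apply/negP => /eqP/matrixP/(_ 0 0); rewrite !mxE => /eqP; rewrite oner_eq0.
have := lt_le_trans (PA.2 v nz_v) (qform_le_mxtrace v PA PB).
by rewrite pmulr_lgt0 //; exact: PB.2.
Qed.

Lemma mxtrace_mul_invmx_ge0 n (A B : 'M[R]_n) :
  posdef A -> posdef B -> 0 <= \tr (A *m invmx B).
Proof.
case: n A B => [|n] A B PA PB; first by rewrite [_ *m _]flatmx0 mxtrace0.
exact/ltW/mxtrace_mul_invmx_gt0.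
Qed.

Lemma qform_chain n (A : nat -> 'M[R]_n) k : (forall i, (i <= k)%N -> posdef (A i)) ->
  forall v, qform (A 0%N) v <= (\prod_(0 <= i < k) \tr (A i *m invmx (A i.+1))) * qform (A k) v.
Proof.
elim: k => [|k IH] PA v; first by rewrite big_geq // mul1r.
have PAk i : (i <= k)%N -> posdef (A i) by move=> le_ik; apply: PA; exact: leqW.
rewrite big_nat_recr //= -mulrA; apply: le_trans (IH PAk v) _; apply: ler_wpM2l.
  rewrite big_seq; apply: prodr_ge0 => i; rewrite mem_index_iota => /andP[_ lt_ik].
  by apply: mxtrace_mul_invmx_ge0; apply: PAk => //; exact: ltnW.
exact: qform_le_mxtrace (PA k (leqnSn k)) (PA k.+1 (leqnn _)).
Qed.
End PositiveDefinite.

Section PowerBounds.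
Variable R : realType.

Lemma powR_le_tangent1 (x al : R) : 0 <= x -> 0 < al <= 1 -> x `^ al <= 1 - al + al * x.
Proof.
move=> x_ge0 /andP[al_gt0 al_le1]; have [->|al_neq1] := eqVneq al 1.
  by rewrite powRr1 // subrr add0r mul1r.
have al_lt1 : al < 1 by rewrite lt_neqAle al_neq1.
have := @conjugate_powR R (x `^ al) 1 al^-1 (1 - al)^-1 (powR_ge0 _ _) ler01.
rewrite !invr_gt0 al_gt0 subr_gt0 al_lt1 !invrK addrC subrK => /(_ isT isT erefl).
by rewrite -powRrM mulfV ?gt_eqF // powRr1 // powR1 mulr1 mul1r; lra.
Qed.

Lemma powR_div (x y al : R) : 0 <= x -> 0 < y -> x `^ al * y `^ (- al) = (x / y) `^ al.
Proof.
move=> x_ge0 y_gt0.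
by rewrite powRM ?invr_ge0 ?(ltW y_gt0) // -powR_inv1 ?(ltW y_gt0) // -powRrM mulN1r.
Qed.

Lemma sum_powR_le (I : finType) (w x : I -> R) (al T : R) : 0 < al <= 1 -> 0 < T ->
  (forall i, 0 <= w i) -> (forall i, 0 <= x i) ->
  \sum_i w i = 1 -> \sum_i w i * x i <= T -> \sum_i w i * x i `^ al <= T `^ al.
Proof.
move=> al01 T_gt0 w_ge0 x_ge0 w_sum wx_le.
have tangent i : x i `^ al <= T `^ al * (1 - al + al * (x i / T)).
  rewrite {1}(_ : x i = T * (x i / T)); last by rewrite mulrC divfK ?gt_eqF.
  rewrite powRM ?(ltW T_gt0) ?divr_ge0 ?(ltW T_gt0) //.
  by rewrite ler_wpM2l ?powR_ge0 // powR_le_tangent1 ?divr_ge0 ?(ltW T_gt0).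
apply: le_trans (ler_sum _ (fun i _ => ler_wpM2l (w_ge0 i) (tangent i))) _.
have -> : \sum_i w i * (T `^ al * (1 - al + al * (x i / T))) =
    T `^ al * (1 - al) * \sum_i w i + T `^ al * al / T * \sum_i w i * x i.
  rewrite !mulr_sumr -big_split; apply: eq_bigr => i _ /=.
  by field; rewrite gt_eqF.
have c_ge0 : 0 <= T `^ al * al / T.
  by case/andP: al01 => al_gt0 _; rewrite divr_ge0 ?mulr_ge0 ?powR_ge0 ?ltW.
have := ler_wpM2l c_ge0 wx_le.
rewrite w_sum mulr1 (_ : T `^ al * al / T * T = T `^ al * al); last by field; rewrite gt_eqF.
lra.
Qed.
End PowerBounds.

Section SpectralTrace.
Variable R : realType.

Lemma qform_delta n (X : 'M[R]_n) (j : 'I_n) : qform X (delta_mx j 0) = X j j.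
Proof. by rewrite /qform trmx_delta -rowE -colE !mxE. Qed.

Lemma qform_mulmx n (X G : 'M[R]_n) (v : 'cV[R]_n) : qform X (G *m v) = qform (G^T *m X *m G) v.
Proof. by rewrite /qform trmx_mul !mulmxA. Qed.

Lemma congr_diag_mxE n (W : 'M[R]_n) (d : 'rV[R]_n) (j : 'I_n) :
  (W^T *m diag_mx d *m W) j j = \sum_i W i j ^+ 2 * d 0 i.
Proof. by rewrite mxE; apply: eq_bigr => i _; rewrite mul_mx_diag !mxE; ring. Qed.

Lemma mxtrace_spectral_mul n (Q U : 'M[R]_n) (a b : 'rV[R]_n) :
  \tr ((Q *m diag_mx a *m Q^T) *m (U *m diag_mx b *m U^T)) =
  \sum_j \sum_i (Q^T *m U) i j ^+ 2 * (a 0 i * b 0 j).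
Proof.
set W := Q^T *m U.
have -> : (Q *m diag_mx a *m Q^T) *m (U *m diag_mx b *m U^T) =
    Q *m (diag_mx a *m W *m diag_mx b *m U^T) by rewrite !mulmxA.
rewrite mxtrace_mulC.
have -> : diag_mx a *m W *m diag_mx b *m U^T *m Q = diag_mx a *m W *m diag_mx b *m W^T.
  by rewrite /W trmx_mul trmxK !mulmxA.
rewrite /mxtrace [RHS]exchange_big; apply: eq_bigr => i _ /=.
by rewrite mxE; apply: eq_bigr => j _; rewrite mul_mx_diag mul_diag_mx !mxE; ring.
Qed.

Lemma mxtrace_spectral_powR_le n (P M Q U : 'M[R]_n) (d e : 'rV[R]_n) (al T : R) :
  spec_decomp P Q d -> spec_decomp M U e -> 0 < al <= 1 -> 0 < T ->
  (forall v, qform P v <= T * qform M v) ->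
  \tr ((Q *m diag_mx (map_mx (fun x => x `^ al) d) *m Q^T) *m
       (U *m diag_mx (map_mx (fun x => x `^ (- al)) e) *m U^T)) <= n%:R * T `^ al.
Proof.
move=> [QQ [d_gt0 defP]] [UU [e_gt0 defM]] al01 T_gt0 PM.
rewrite mxtrace_spectral_mul; set W := Q^T *m U.
have WW : W^T *m W = 1%:M.
  by rewrite trmx_mul trmxK -mulmxA /W (mulmxA Q) (mulmx1C QQ) mul1mx.
have colW j : \sum_i W i j ^+ 2 = 1.
  have := congr1 (fun X : 'M[R]_n => X j j) WW; rewrite /= !mxE eqxx => /(etrans _); apply.
  by apply: eq_bigr => i _; rewrite [W^T _ _]mxE expr2.
have PM_diag j : \sum_i W i j ^+ 2 * d 0 i <= T * e 0 j.
  have := PM (U *m delta_mx j 0); rewrite !qform_mulmx !qform_delta.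
  have -> : U^T *m M *m U = diag_mx e by rewrite defM !mulmxA UU mul1mx -mulmxA UU mulmx1.
  have -> : U^T *m P *m U = W^T *m diag_mx d *m W by rewrite defP trmx_mul trmxK !mulmxA.
  by rewrite congr_diag_mxE mxE eqxx mulr1n.
rewrite mulr_natl -[in X in _ *+ X](card_ord n) -sumr_const; apply: ler_sum => j _.
rewrite (eq_bigr (fun i => W i j ^+ 2 * (d 0 i / e 0 j) `^ al)); last first.
  by move=> i _; rewrite !mxE powR_div // ltW.
apply: sum_powR_le => // [i|i|]; first exact: sqr_ge0.
  by rewrite divr_ge0 // ltW.
by under eq_bigr do rewrite mulrA; rewrite -mulr_suml ler_pdivrMr.
Qed.
End SpectralTrace.

Section MatrixPower.
Variable R : realType.

Lemma matpowP n (A : 'M[R]_n) (a : R) :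
  matpow A a = 0 \/ exists Q d, spec_decomp A Q d /\
    matpow A a = Q *m diag_mx (map_mx (fun x => x `^ a) d) *m Q^T.
Proof.
rewrite /matpow; case: pselect => [h|_]; last by left.
by case: (cid h) => [[Q d] QdA]; right; exists Q, d.
Qed.

Lemma mxtrace_matpow_le n (P M : 'M[R]_n) (al T : R) : 0 < al <= 1 -> 0 < T ->
  (forall v, qform P v <= T * qform M v) ->
  \tr (matpow P al *m matpow M (- al)) <= n%:R * T `^ al.
Proof.
move=> al01 T_gt0 PM; have bound_ge0 : 0 <= n%:R * T `^ al by rewrite mulr_ge0 ?powR_ge0.
have [->|[Q [d [PQd ->]]]] := matpowP P al; first by rewrite mul0mx mxtrace0.
have [->|[U [e [MUe ->]]]] := matpowP M (- al); first by rewrite mulmx0 mxtrace0.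
exact: mxtrace_spectral_powR_le PM.
Qed.

Lemma powR_AGM k (t : nat -> R) : (0 < k)%N -> (forall i, (i < k)%N -> 0 <= t i) ->
  (\prod_(0 <= i < k) t i) `^ k%:R^-1 <= (\sum_(0 <= i < k) t i) / k%:R.
Proof.
move=> k_gt0 t_ge0; rewrite !big_mkord.
have [agm _] := leif_AGM (A := predT) (E := fun i : 'I_k => t i) (fun i _ => t_ge0 i (ltn_ord i)).
rewrite card_ord in agm.
have mean_ge0 : 0 <= (\sum_(i < k) t i) / k%:R by rewrite divr_ge0 ?sumr_ge0 // => i _; exact: t_ge0.
have -> : (\sum_(i < k) t i) / k%:R = (((\sum_(i < k) t i) / k%:R) ^+ k) `^ k%:R^-1.
  by rewrite -powR_mulrn // -powRrM mulfV ?pnatr_eq0 -?lt0n // powRr1.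
rewrite ge0_ler_powR ?invr_ge0 // ?nnegrE ?exprn_ge0 //.
by apply: prodr_ge0 => i _; exact: t_ge0.
Qed.
End MatrixPower.

Unset Implicit Arguments.

(* A_1, ..., A_m are A 0, ..., A (m-1). *)
Theorem lemmaC2 (R : realType) (n m : nat) : (2 <= m)%N ->
  exists alpha c d : R, 0 < alpha /\ 0 < c /\ 0 <= d /\
    forall A : nat -> 'M[R]_n, (forall i, (i < m)%N -> posdef (A i)) ->
      \sum_(0 <= i < m.-1) \tr (A i *m invmx (A i.+1))
        >= c * \tr (matpow (A 0%N) alpha *m matpow (A m.-1) (- alpha)) - d.
Proof.
move=> m_ge2; set k := m.-1.
have k_gt0 : (0 < k)%N by rewrite /k -ltnS prednK // ltnW.
have lt_km : (k < m)%N by rewrite /k prednK // ltnW.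
case: n => [|n].
  have tr0 (X : 'M[R]_0) : \tr X = 0 by rewrite flatmx0 mxtrace0.
  exists 1, 1, 0; do 3!split=> //; move=> A _.
  by rewrite tr0 mulr0 subr0 big1 // => i _; rewrite tr0.
exists k%:R^-1, (k%:R / n.+1%:R), 0; do !split=> //.
- by rewrite invr_gt0 ltr0n.
- by rewrite divr_gt0 ?ltr0n.
move=> A PA; rewrite subr0.
have PAk i : (i <= k)%N -> posdef (A i) by move=> le_ik; apply: PA; exact: leq_ltn_trans lt_km.
pose t i := \tr (A i *m invmx (A i.+1)).
have t_gt0 i : (i < k)%N -> 0 < t i.
  by move=> lt_ik; apply: mxtrace_mul_invmx_gt0; apply: PAk => //; exact: ltnW.
have T_gt0 : 0 < \prod_(0 <= i < k) t i.
  by rewrite big_seq; apply: prodr_gt0 => i; rewrite mem_index_iota => /andP[_ /t_gt0].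
have al01 : 0 < (k%:R^-1 : R) <= 1 by rewrite invr_gt0 ltr0n k_gt0 invf_le1 ?ltr0n // ler1n.
have tr_le := mxtrace_matpow_le al01 T_gt0 (qform_chain PAk).
have agm := powR_AGM k_gt0 (fun i lt_ik => ltW (t_gt0 i lt_ik)).
have c_ge0 : 0 <= (k%:R / n.+1%:R : R) by rewrite divr_ge0 ?ler0n.
apply: le_trans (ler_wpM2l c_ge0 (le_trans tr_le (ler_wpM2l (ler0n _ _) agm))) _.
rewrite mulrA -(mulrA _ _^-1) mulVf ?pnatr_eq0 // mulr1 mulrC divfK // pnatr_eq0 -lt0n //.
Qed.
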